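(* Let $M_{pq}=(W,V_{pq})$ be the inquisitive model with $W=\{w_1,w_2,w_3\}$, $V_{pq}(w_1)=\{p\}$, $V_{pq}(w_2)=\{q\}$, $V_{pq}(w_3)=\emptyset$, where $p,q$ are distinct propositional letters. Let $\varphi(a,b)$ be a formula of $\textsf{INQ}^-$ (with $a,b$ propositional letters) in which $p$ and $q$ do not occur, and let $\varphi(?p,?q)$ denote the result of replacing every occurrence of $a$ by $?p$ and every occurrence of $b$ by $?q$. If $\varphi(?p,?q)\not\equiv_{M_{pq}}\bot$, then $\{w_i\}\models\varphi(?p,?q)$ in $M_{pq}$ for each $i=1,2,3$.
   Context: $\textsf{INQ}^-$ is the propositional language built from countably many propositional letters using the 0-ary connectives $\bot,\top$, the unary connectives $\neg,?$ and the binary connectives $\land$, $\vee$ (inquisitive/global disjunction) and $\otimes$ (tensor). A model is a pair $M=(W,V)$ with $W$ a set of worlds and $V$ assigning to each world a set of propositional letters. Support at a state $s\subseteq W$ is defined by: $s\models p$ iff $p\in V(w)$ for all $w\in s$; $s\models\bot$ iff $s=\emptyset$; $s\models\top$ always; $s\models\psi\land\chi$ iff $s\models\psi$ and $s\models\chi$; $s\models\psi\vee\chi$ iff $s\models\psi$ or $s\models\chi$; $s\models\psi\otimes\chi$ iff there are $t_1,t_2$ with $t_1\models\psi$, $t_2\models\chi$ and $s=t_1\cup t_2$; $s\models\neg\psi$ iff $t\not\models\psi$ for all nonempty... precisely: iff for all $t\subseteq s$, $t\models\psi$ implies $t=\emptyset$; $s\models ?\psi$ iff $s\models\psi$ or $s\models\neg\psi$.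 Two formulas are equivalent in $M$ ($\psi\equiv_M\chi$) if they are supported by exactly the same states of $M$. *)

From mathcomp Require Import all_boot.
Set Implicit Arguments. Unset Strict Implicit. Unset Printing Implicit Defensive.

Inductive form : Type :=
  | Atom : nat -> form
  | FBot : form
  | FTop : form
  | FNeg : form -> form
  | FQ : form -> form
  | FAnd : form -> form -> form
  | FOr : form -> form -> form   (* inquisitive / global disjunction *)
  | FTensor : form -> form -> form.

Fixpoint occurs (x : nat) (f : form) : bool :=
  match f with
  | Atom y => y == x
  | FBot | FTop => false
  | FNeg g | FQ g => occurs x g
  | FAnd g h | FOr g h | FTensor g h => occurs x g || occurs x h
  end.

Fixpoint subst2 (a b p q : nat) (f : form) : form :=
  match f with
  | Atom y => if y == a then FQ (Atom p) else if y == b then FQ (Atom q) else Atom y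
  | FBot => FBot
  | FTop => FTop
  | FNeg g => FNeg (subst2 a b p q g)
  | FQ g => FQ (subst2 a b p q g)
  | FAnd g h => FAnd (subst2 a b p q g) (subst2 a b p q h)
  | FOr g h => FOr (subst2 a b p q g) (subst2 a b p q h)
  | FTensor g h => FTensor (subst2 a b p q g) (subst2 a b p q h)
  end.

(* Support semantics on a model with a finite set of worlds W and valuation
   V w x = true iff letter x is in V(w); states are subsets of W. *)
Fixpoint supp (W : finType) (V : W -> nat -> bool) (s : {set W}) (f : form) : Prop :=
  match f with
  | Atom x => forall w, w \in s -> V w x
  | FBot => s = set0
  | FTop => True
  | FAnd g h => supp V s g /\ supp V s h
  | FOr g h => supp V s g \/ supp V s h
  | FTensor g h => exists t1 t2 : {set W},
      supp V t1 g /\ supp V t2 h /\ s = t1 :|: t2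
  | FNeg g => forall t : {set W}, t \subset s -> supp V t g -> t = set0
  | FQ g => supp V s g \/
      (forall t : {set W}, t \subset s -> supp V t g -> t = set0)
  end.

Definition equiv_in (W : finType) (V : W -> nat -> bool) (f g : form) : Prop :=
  forall s : {set W}, supp V s f <-> supp V s g.

(* The model M_pq: W = {w1,w2,w3} encoded as 'I_3 = {0,1,2};
   V(w1) = {p}, V(w2) = {q}, V(w3) = {}. *)
Definition Vpq (p q : nat) (w : 'I_3) (x : nat) : bool :=
  ((val w == 0) && (x == p)) || ((val w == 1) && (x == q)).

From mathcomp Require Import all_boot.
From Stdlib Require Import Classical.

Set Implicit Arguments. Unset Strict Implicit. Unset Printing Implicit Defensive.

(* On a singleton state support is classical truth: [?] is always supported,
   [~] is classical negation and the tensor behaves like disjunction.  In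
   [M_pq] the letters other than [p] and [q] hold nowhere, while [?p] and [?q]
   hold at every singleton, so by induction [phi(?p,?q)] is supported either
   at all singletons or at none.  In the second case persistence leaves only
   the empty state, i.e. [phi(?p,?q)] is equivalent to [FBot]. *)

Section Support.
Variables (W : finType) (V : W -> nat -> bool).

Lemma supp_set0 f : supp V set0 f.
Proof.
elim: f => /= [x|||g ?|g ?|g ? h ?|g ? h ?|g ? h ?] //; try by left.
- by move=> w; rewrite in_set0.
- by move=> t; rewrite subset0 => /eqP.
- by exists set0, set0; rewrite setU0.
Qed.

Lemma supp_subset f (s s' : {set W}) : s \subset s' -> supp V s' f -> supp V s f.
Proof.
elim: f s s' => /= [x|||g ?|g IH|g IHg h IHh|g IHg h IHh|g IHg h IHh] s s' ss'.
- by move=> Vs' w /(subsetP ss'); apply: Vs'.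
- by move=> s'0; apply/eqP; rewrite -subset0 -s'0.
- by [].
- by move=> neg_g t ts; apply: neg_g; apply: subset_trans ss'.
- case=> [g_s'|neg_g]; first by left; apply: IH g_s'.
  by right=> t ts; apply: neg_g; apply: subset_trans ss'.
- by case=> g_s' h_s'; split; [apply: IHg g_s'|apply: IHh h_s'].
- by case=> [g_s'|h_s']; [left; apply: IHg g_s'|right; apply: IHh h_s'].
- case=> [t1 [t2 [g_t1 [h_t2 s'E]]]]; rewrite s'E in ss'.
  exists (t1 :&: s), (t2 :&: s); split; last split.
  + exact: IHg (subsetIl _ _) g_t1.
  + exact: IHh (subsetIl _ _) h_t2.
  + by rewrite -setIUl; apply/esym/setIidPr.
Qed.

Lemma subset_set1P (t : {set W}) w : t \subset [set w] -> t = set0 \/ t = [set w].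
Proof. by rewrite subset1 => /orP[/eqP|/eqP]; [right|left]. Qed.

Lemma set1_neq0 w : [set w] <> set0 :> {set W}.
Proof. by move/setP/(_ w); rewrite !inE eqxx. Qed.

Lemma supp1_atom x w : supp V [set w] (Atom x) <-> V w x.
Proof. by split=> [|Vwx w']; [apply; rewrite set11|rewrite inE => /eqP ->]. Qed.

Lemma supp1_neg g w : supp V [set w] (FNeg g) <-> ~ supp V [set w] g.
Proof.
split=> [neg_g g_w|not_g t /subset_set1P[//|->] g_w //].
exact/set1_neq0/(neg_g _ (subxx _) g_w).
Qed.

Lemma supp1_question g w : supp V [set w] (FQ g).
Proof.
have [g_w|not_g] := classic (supp V [set w] g); first by left.
by right; apply/supp1_neg.
Qed.

Lemma supp1_tensor g h w :
  supp V [set w] (FTensor g h) <-> supp V [set w] g \/ supp V [set w] h.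
Proof.
split=> [[t1 [t2 [g_t1 [h_t2 wE]]]]|[g_w|h_w]].
- have /subset_set1P[t1E|<-] : t1 \subset [set w] by rewrite wE subsetUl.
    have /subset_set1P[t2E|<-] : t2 \subset [set w] by rewrite wE subsetUr.
      by move: wE; rewrite t1E t2E setU0 => /set1_neq0.
    by right.
  by left.
- by exists [set w], set0; rewrite setU0; do !split => //; apply: supp_set0.
- by exists set0, [set w]; rewrite set0U; do !split => //; apply: supp_set0.
Qed.

Lemma equiv_bot_of_unsupported_points f :
  (forall w, ~ supp V [set w] f) -> equiv_in V f FBot.
Proof.
move=> unsupp s; split=> [f_s|/= ->]; last exact: supp_set0.
apply/eqP/set0Pn => -[w ws]; apply: (unsupp w).
by apply: supp_subset f_s; rewrite sub1set.
Qed.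

Definition constant_on_points f :=
  (forall w, supp V [set w] f) \/ (forall w, ~ supp V [set w] f).

Lemma constant_on_points_neg g :
  constant_on_points g -> constant_on_points (FNeg g).
Proof.
case=> [g_all|g_none]; first by right=> w /supp1_neg; apply.
by left=> w; apply/supp1_neg/g_none.
Qed.

Lemma constant_on_points_and g h : constant_on_points g ->
  constant_on_points h -> constant_on_points (FAnd g h).
Proof.
case=> [g_all|g_none]; last by right=> w [/g_none].
by case=> [h_all|h_none]; [left=> w; split|right=> w [_ /h_none]].
Qed.

Lemma constant_on_points_or g h : constant_on_points g ->
  constant_on_points h -> constant_on_points (FOr g h).
Proof.
case=> [g_all|g_none]; first by left=> w; left.
by case=> [h_all|h_none]; [left=> w; right|right=> w [/g_none|/h_none]].
Qed.

Lemma constant_on_points_tensor g h : constant_on_points g ->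
  constant_on_points h -> constant_on_points (FTensor g h).
Proof.
move=> /constant_on_points_or/[apply] -[gh_all|gh_none].
  by left=> w; apply/supp1_tensor/gh_all.
by right=> w /supp1_tensor; apply: gh_none.
Qed.

End Support.

Lemma Vpq_other p q x (w : 'I_3) : x != p -> x != q -> Vpq p q w x = false.
Proof. by move=> /negbTE xp /negbTE xq; rewrite /Vpq xp xq !andbF. Qed.

Lemma constant_on_points_subst2 p q a b phi :
  ~~ occurs p phi -> ~~ occurs q phi ->
  constant_on_points (Vpq p q) (subst2 a b p q phi).
Proof.
elim: phi => [y|||g IH|g ?|g IHg h IHh|g IHg h IHh|g IHg h IHh] /=;
  rewrite ?negb_or => p_phi q_phi; try case/andP: p_phi => p_g p_h;
  try case/andP: q_phi => q_g q_h.
- case: ifP => _; first by left=> w; apply: supp1_question.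
  case: ifP => _; first by left=> w; apply: supp1_question.
  by right=> w /supp1_atom; rewrite Vpq_other.
- by right=> w; apply: set1_neq0.
- by left.
- exact/constant_on_points_neg/IH.
- by left=> w; apply: supp1_question.
- exact: constant_on_points_and (IHg _ _) (IHh _ _).
- exact: constant_on_points_or (IHg _ _) (IHh _ _).
- exact: constant_on_points_tensor (IHg _ _) (IHh _ _).
Qed.

Theorem lemma1 (p q a b : nat) (phi : form) :
  p <> q -> a <> b ->
  ~~ occurs p phi -> ~~ occurs q phi ->
  ~ equiv_in (Vpq p q) (subst2 a b p q phi) FBot ->
  forall i : 'I_3, supp (Vpq p q) [set i] (subst2 a b p q phi).
Proof.
move=> _ _ p_phi q_phi not_bot.
have [//|unsupported] := constant_on_points_subst2 a b p_phi q_phi.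
by case: not_bot; apply: equiv_bot_of_unsupported_points.
Qed.
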